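(* Let $k$ be a number field and let $u_1,u_2,u_3\in k$ be such that $0,u_1,u_2,u_3$ are pairwise distinct. Then there are infinitely many general Huff curves $$G_{a,b}:\ x(ay^2-1)=y(bx^2-1),\qquad a,b\in k,\ ab(a-b)\neq0,$$ such that each of $0,u_1,u_2,u_3$ is the $x$-coordinate of a point of $G_{a,b}(k)$. *)

From HB Require Import structures.
From mathcomp Require Import all_boot all_order all_algebra all_field.
Set Implicit Arguments. Unset Strict Implicit. Unset Printing Implicit Defensive.
Import GRing.Theory Num.Theory.
Local Open Scope ring_scope.

(* A number field is modelled as a finite-dimensional field extension of Q:
   k : fieldExtType rat. *)

Definition on_huff (k : fieldType) (a b x y : k) : Prop :=
  x * (a * y ^+ 2 - 1) = y * (b * x ^+ 2 - 1).

Definition huff_xcoord (k : fieldType) (a b x : k) : Prop :=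
  exists y : k, on_huff a b x y.

Definition huff_params (k : fieldType) (a b : k) : Prop :=
  a * b * (a - b) != 0.

From HB Require Import structures.
From mathcomp Require Import all_boot all_order all_algebra all_field.
From mathcomp Require Import ring.
Set Implicit Arguments. Unset Strict Implicit.
Import GRing.Theory Num.Theory.
Local Open Scope ring_scope.

(* For x = u <> 0 the equation of G_{a,b} is the quadratic
   a y^2 - (b u - 1/u) y - 1 = 0 in y, so (a <> 0) u is an x-coordinate of a
   rational point as soon as the discriminant (b u - 1/u)^2 + 4 a is a square;
   x = 0 always works (y = 0). *)

Section HuffPoints.
Variable F : fieldType.
Hypothesis two_neq0 : (2 : F) != 0.

Lemma huff_xcoord0 (a b : F) : huff_xcoord a b 0.
Proof. by exists 0; rewrite /on_huff !mul0r. Qed.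

Lemma huff_xcoord_square (a b u r : F) : u != 0 -> a != 0 ->
  r ^+ 2 = (b * u - u^-1) ^+ 2 + 4 * a -> huff_xcoord a b u.
Proof.
move=> u0 a0 disc; exists ((b * u - u^-1 + r) / (2 * a)).
apply/eqP; rewrite /on_huff -subr_eq0; apply/eqP.
have four_neq0 : (4 : F) != 0 by rewrite (_ : 4 = 2 * 2) ?mulf_neq0 //; ring.
transitivity (u * (r ^+ 2 - (b * u - u^-1) ^+ 2 - 4 * a) / (4 * a)).
  by field; rewrite a0 four_neq0 u0 two_neq0.
by rewrite disc; ring.
Qed.

End HuffPoints.

Lemma natr_inj_ratext (k : fieldExtType rat) : injective (fun n : nat => n%:R : k).
Proof.
move=> m n /= eq_mn.
have : in_alg k m%:R = in_alg k n%:R by rewrite !rmorph_nat.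
by move/fmorph_inj/eqP; rewrite eqr_nat => /eqP.
Qed.

Section CharZero.
Variable F : fieldType.
Hypothesis natr_inj : injective (fun n : nat => n%:R : F).

Lemma natr_succ_neq0 (n : nat) : (n.+1%:R : F) != 0.
Proof. by apply/eqP => /(@natr_inj n.+1 0). Qed.

Lemma two_neq0_char0 : (2 : F) != 0.
Proof. exact: natr_succ_neq0 1. Qed.

(* A nonzero polynomial has at most size p - 1 roots, so it cannot vanish at
   the size p distinct naturals 0, ..., size p - 1. *)
Lemma exists_nat_nonroot (p : {poly F}) : p != 0 -> exists n : nat, ~~ root p n%:R.
Proof.
move=> p0; pose ns := iota 0 (size p).
have [/hasP [n _ ?]|/hasPn all_roots] := boolP (has (fun n : nat => ~~ root p n%:R) ns).
  by exists n.
suff : (size [seq n%:R : F | n <- ns] < size p)%N by rewrite size_map size_iota ltnn.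
apply: max_poly_roots p0 _ _; last by rewrite map_inj_uniq ?iota_uniq.
by apply/allP => _ /mapP [n ns_n ->]; rewrite -[root _ _]negbK all_roots.
Qed.

(* Writing d = Q^2 - P^2 as (Q - P)(Q + P) with Q - P = t and Q + P = d / t
   gives P = (d / t - t) / 2 and Q = (d / t + t) / 2. *)
Definition sq_param (d t : F) : F := (d / t - t) / 2.

(* The polynomial in t whose value is 4 t^2 (P(t)^2 - w); its nonvanishing at t
   says that the parameter a attached to t avoids the value (w - c^2) / 4. *)
Definition avoid_poly (d w : F) : {poly F} :=
  'X^4 - (2 * d + 4 * w)%:P * 'X^2 + (d ^+ 2)%:P.

Lemma avoid_poly_neq0 (d w : F) : avoid_poly d w != 0.
Proof.
apply/eqP => /(congr1 (fun p : {poly F} => p`_4)).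
by rewrite /avoid_poly !coefE /= mulr0 subr0 addr0 => /eqP; rewrite oner_eq0.
Qed.

Lemma avoid_polyE (d w t : F) : t != 0 ->
  (avoid_poly d w).[t] = 4 * t ^+ 2 * (sq_param d t ^+ 2 - w).
Proof.
move=> t0; transitivity (t ^+ 4 - (2 * d + 4 * w) * t ^+ 2 + d ^+ 2).
  by rewrite /avoid_poly !hornerE expr2.
by rewrite /sq_param; field; rewrite t0 two_neq0_char0.
Qed.

Lemma two_squares_avoiding (c c3 : F) (vs : seq F) :
  exists a r q : F,
    [/\ a \notin vs, r ^+ 2 = c ^+ 2 + 4 * a & q ^+ 2 = c3 ^+ 2 + 4 * a].
Proof.
pose d := c3 ^+ 2 - c ^+ 2.
pose p := 'X * \prod_(v <- vs) avoid_poly d (c ^+ 2 + 4 * v).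
have p0 : p != 0.
  rewrite mulf_neq0 ?polyX_eq0 // prodf_seq_neq0.
  by apply/allP => v _; exact: avoid_poly_neq0.
have [n] := exists_nat_nonroot p0; set t := n%:R.
rewrite /root hornerM hornerX mulf_eq0 negb_or horner_prod prodf_seq_neq0.
case/andP => t0 /allP avoid_t.
pose P := sq_param d t; pose Q := (d / t + t) / 2.
have four0 : (4 : F) != 0 := natr_succ_neq0 3.
have P_sq : P ^+ 2 = c ^+ 2 + 4 * ((P ^+ 2 - c ^+ 2) / 4).
  by field; rewrite four0.
exists ((P ^+ 2 - c ^+ 2) / 4), P, Q; split=> //.
- apply/negP => vs_a; have := avoid_t _ vs_a.
  by rewrite avoid_polyE // -P_sq subrr mulr0 eqxx.
- rewrite /Q /P /sq_param /d; field.
  by rewrite four0 t0 two_neq0_char0.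
Qed.

End CharZero.

Lemma huff_coeff_common (F : fieldType) (u1 u2 : F) : u1 != 0 -> u2 != 0 ->
  - (u1 * u2)^-1 * u2 - u2^-1 = - (u1 * u2)^-1 * u1 - u1^-1.
Proof. by move=> u1_0 u2_0; field; rewrite u1_0 u2_0. Qed.

Theorem theorem4 (k : fieldExtType rat) (u1 u2 u3 : k) :
  uniq [:: 0; u1; u2; u3] ->
  forall s : seq (k * k), exists a b : k,
    (a, b) \notin s /\ huff_params a b /\
    (forall x, x \in [:: 0; u1; u2; u3] -> huff_xcoord a b x).
Proof.
rewrite /= !inE !negb_or !(eq_sym 0) => /and4P [/and3P [u1_0 u2_0 u3_0] _ _ _] s.
have natr_inj := @natr_inj_ratext k.
have two0 : (2 : k) != 0 := two_neq0_char0 natr_inj.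
pose b := - (u1 * u2)^-1.
have b0 : b != 0 by rewrite oppr_eq0 invr_eq0 mulf_neq0.
have [a [r [q [a_new r_sq q_sq]]]] := two_squares_avoiding natr_inj
  (b * u1 - u1^-1) (b * u3 - u3^-1) [:: 0, b & map fst s].
move: a_new; rewrite !inE !negb_or => /and3P [a0 ab a_s].
exists a, b; split; [|split].
- by apply: contra a_s => ab_s; apply/mapP; exists (a, b).
- by rewrite /huff_params !mulf_neq0 // subr_eq0.
- move=> x; rewrite !inE => /or4P [] /eqP ->.
  + exact: huff_xcoord0.
  + exact: (huff_xcoord_square (b := b) two0 u1_0 a0 r_sq).
  + by apply: (huff_xcoord_square (b := b) (r := r) two0 u2_0 a0); rewrite huff_coeff_common.
  + exact: (huff_xcoord_square (b := b) two0 u3_0 a0 q_sq).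
Qed.
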